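(* Let $G$ be a primitive strongly regular graph with parameters $(v,k,\lambda,\mu)$, and let $s$ be its smallest adjacency eigenvalue. Then $k/|s| > v^{1/6}/2$.
   Context: A graph is strongly regular with parameters $(v,k,\lambda,\mu)$ if it is a $k$-regular graph on $v$ vertices such that each edge lies in exactly $\lambda$ triangles and any two distinct non-adjacent vertices have exactly $\mu$ common neighbours; complete and edgeless graphs are excluded. A strongly regular graph is primitive if both it and its complement are connected. A connected strongly regular graph has, besides $k$, exactly two distinct adjacency eigenvalues $r>0$ and $s<-1$. *)

From HB Require Import structures.
From mathcomp Require Import all_boot all_order all_algebra.
From mathcomp Require Import reals exp.
Set Implicit Arguments. Unset Strict Implicit. Unset Printing Implicit Defensive.
Import Order.TTheory GRing.Theory Num.Theory.
Local Open Scope ring_scope.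

Definition simple_graph (T : finType) (e : rel T) : Prop :=
  symmetric e /\ irreflexive e.

Definition compl_rel (T : finType) (e : rel T) : rel T :=
  fun x y => (x != y) && ~~ e x y.

Definition srg (T : finType) (e : rel T) (v k lam mu : nat) : Prop :=
  simple_graph e /\
  #|T| = v /\
  (forall x : T, #|[set y | e x y]| = k) /\
  (forall x y : T, e x y -> #|[set z | e x z && e y z]| = lam) /\
  (forall x y : T, x != y -> ~~ e x y -> #|[set z | e x z && e y z]| = mu) /\
  (exists x y : T, e x y) /\
  (exists x y : T, compl_rel e x y).

Definition graph_connected (T : finType) (e : rel T) : Prop :=
  forall x y : T, connect e x y.

Definition primitive_srg (T : finType) (e : rel T) (v k lam mu : nat) : Prop :=
  srg e v k lam mu /\ graph_connected e /\ graph_connected (compl_rel e).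

Definition adjmx (R : nzRingType) (T : finType) (e : rel T) : 'M[R]_#|T| :=
  \matrix_(i, j) (e (enum_val i) (enum_val j))%:R.

Definition smallest_eigenvalue (R : realFieldType) (T : finType) (e : rel T) (s : R) : Prop :=
  eigenvalue (adjmx R e) s /\ forall t : R, eigenvalue (adjmx R e) t -> s <= t.

(* Let r > 0 > s be the two restricted eigenvalues and g the multiplicity of s.
   The matrix (A - k)(A - r) is a multiple of the projection onto the
   s-eigenspace, so it has rank g and its trace gives g (k - s)(r - s) = k v (1 + r).
   Its entries take only three values, so I is a combination of its Schur square,
   itself and J, which yields the absolute bound v <= g^2 + g + 1.
   If |s| <= 2r then |s|^2 < 2k and v <= 2k^2; otherwise |s| < 2 mu and the trace
   identity gives g |s|^3 <= 4k^3.  Either way v |s|^6 < 64 k^6. *)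

From HB Require Import structures.
From mathcomp Require Import all_boot all_order all_algebra.
From mathcomp Require Import reals exp.
From mathcomp.algebra_tactics Require Import ring lra.

Set Implicit Arguments.
Unset Strict Implicit.
Unset Printing Implicit Defensive.

Import Order.TTheory GRing.Theory Num.Theory.
Local Open Scope ring_scope.

Section RankTrace.
Variable F : fieldType.

Lemma mxtrace_idem n (E : 'M[F]_n) : E *m E = E -> \tr E = (\rank E)%:R.
Proof.
move=> EE; have := mulmx_base E.
have [C' C'C] := row_fullP (col_base_full E).
have [B' BB'] := row_freeP (row_base_free E).
move: (col_base E) (row_base E) C'C BB' => C B C'C BB' eCB.
have BC : B *m C = 1%:M.
  have h : C' *m (C *m B *m (C *m B)) *m B' = C' *m (C *m B) *m B'.
    by rewrite eCB EE.
  by rewrite !mulmxA C'C mul1mx -!mulmxA BB' mulmx1 in h.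
by rewrite -{1}eCB mxtrace_mulC BC mxtrace1.
Qed.

Lemma mxtrace_scaled_idem n (X : 'M[F]_n) c : c != 0 -> X *m X = c *: X ->
  \tr X = c * (\rank X)%:R.
Proof.
move=> c0 XX.
have idem : (c^-1 *: X) *m (c^-1 *: X) = c^-1 *: X.
  by rewrite -scalemxAl -scalemxAr XX !scalerA -mulrA mulVf // mulr1.
rewrite -(mxrank_scale_nz X (invr_neq0 c0)) -mxtrace_idem // mxtraceZ.
by rewrite mulrA divff // mul1r.
Qed.

Lemma mxrank_sum m n (I : Type) (r : seq I) (P : pred I) (G : I -> 'M[F]_(m, n)) :
  (\rank (\sum_(i <- r | P i) G i)%R <= \sum_(i <- r | P i) \rank (G i))%N.
Proof.
elim/big_ind2: _ => [|X1 b1 X2 b2 le1 le2|//]; first by rewrite mxrank0.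
exact: leq_trans (mxrank_add _ _) (leq_add le1 le2).
Qed.

Lemma mxrank_const m n (a : F) : (\rank (const_mx a : 'M[F]_(m, n)) <= 1)%N.
Proof.
have -> : const_mx a = (const_mx a : 'M_(m, 1)) *m (const_mx 1 : 'M_(1, n)).
  by apply/matrixP => i j; rewrite !mxE big_ord1 !mxE mulr1.
exact: mulmx_max_rank.
Qed.

(* Along rank factorizations X = C B and Y = C' B', the Schur product is a sum of
   rank X * rank Y products of a column by a row. *)
Lemma mxrank_schur m n (X Y : 'M[F]_(m, n)) :
  (\rank (\matrix_(i, j) (X i j * Y i j)%R) <= \rank X * \rank Y)%N.
Proof.
have [eX eY] := (mulmx_base X, mulmx_base Y).
move: (col_base X) (row_base X) (col_base Y) (row_base Y) eX eY => C B C' B' eX eY.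
have [Xij Yij] : X =2 C *m B /\ Y =2 C' *m B' by rewrite eX eY.
have -> : \matrix_(i, j) (X i j * Y i j) = \sum_(l < \rank X) \sum_(l' < \rank Y)
    (\col_i (C i l * C' i l')) *m (\row_j (B l j * B' l' j)).
  apply/matrixP => i j; rewrite !mxE Xij Yij !mxE big_distrlr /= summxE.
  apply: eq_bigr => l _; rewrite summxE; apply: eq_bigr => l' _.
  by rewrite !mxE big_ord1 !mxE; ring.
apply: leq_trans; first exact: mxrank_sum.
rewrite -[X in (X * _)%N]card_ord -sum_nat_const; apply: leq_sum => l _.
apply: leq_trans; first exact: mxrank_sum.
rewrite -[X in (_ <= X)%N]card_ord -sum1_card.
by apply: leq_sum => l' _; apply: mulmx_max_rank.
Qed.

End RankTrace.

Lemma absolute_bound (F : fieldType) n (P : 'M[F]_n) p0 p1 p2 :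
  (forall i, P i i = p0) -> (forall i j, i != j -> P i j = p1 \/ P i j = p2) ->
  p0 != p1 -> p0 != p2 -> (n <= \rank P ^ 2 + \rank P + 1)%N.
Proof.
move=> Pdiag Poff p01 p02; set d := (p0 - p1) * (p0 - p2).
have d0 : d != 0 by rewrite mulf_neq0 // subr_eq0.
have eI : d *: 1%:M = \matrix_(i, j) (P i j * P i j) - (p1 + p2) *: P
                      + (p1 * p2) *: (const_mx 1 : 'M_n).
  apply/matrixP => i j; rewrite !mxE.
  have [<-|ij] := eqVneq i j; first by rewrite Pdiag /d /=; ring.
  by case: (Poff _ _ ij) => ->; rewrite /=; ring.
rewrite -[X in (X <= _)%N](mxrank1 F n) -(mxrank_scale_nz _ d0) eI.
apply: leq_trans; first apply: mxrank_add.
apply: leq_add; last first.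
  by apply: leq_trans (mxrank_scale _ _) (mxrank_const n n (1 : F)).
apply: leq_trans; first apply: mxrank_add.
apply: leq_add.
  by rewrite expnS expn1; apply: mxrank_schur.
by rewrite -scaleNr mxrank_scale.
Qed.

Lemma mulmx_sub_scalar (R : comNzRingType) n (A : 'M[R]_n) a b :
  (A - a%:M) *m (A - b%:M) = A *m A - (a + b) *: A + (a * b)%:M.
Proof.
rewrite mulmxBl !mulmxBr mul_mx_scalar mul_scalar_mx -scalar_mxM.
by apply/matrixP => i j; rewrite !mxE; ring.
Qed.

Section SRGMatrix.
Variables (R : rcfType) (n : nat) (A : 'M[R]_n) (k lam mu : R).
Local Notation J := (const_mx 1 : 'M[R]_n).
Hypotheses (AJ : A *m J = k *: J) (trA : \tr A = 0)
  (AA : A *m A = k%:M + lam *: A + mu *: (J - 1%:M - A)).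

Lemma srg_mx_sqr : A *m A = (k - mu)%:M + (lam - mu) *: A + mu *: J.
Proof. by rewrite AA; apply/matrixP => i j; rewrite !mxE; ring. Qed.

Section Factorization.
Variables a b : R.
Hypotheses (ab_sum : a + b = lam - mu) (ab_prod : a * b = mu - k).

Lemma srg_quadratic_factor : (A - a%:M) *m (A - b%:M) = mu *: J.
Proof.
rewrite mulmx_sub_scalar srg_mx_sqr ab_sum ab_prod.
by apply/matrixP => i j; rewrite !mxE; ring.
Qed.

Lemma srg_cubic_factor : (A - k%:M) *m (A - a%:M) *m (A - b%:M) = 0.
Proof.
by rewrite -mulmxA srg_quadratic_factor -scalemxAr mulmxBl AJ mul_scalar_mx
  subrr scaler0.
Qed.

End Factorization.

Lemma mxtrace_srg_quadratic a :
  \tr ((A - k%:M) *m (A - a%:M)) = k * n%:R * (1 + a).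
Proof.
have trJ : \tr J = n%:R.
  rewrite /mxtrace (eq_bigr (fun=> 1)); last by move=> i _; rewrite mxE.
  by rewrite sumr_const card_ord.
rewrite mulmx_sub_scalar AA !(mxtraceD, mxtraceZ, raddfN) /= mxtraceZ.
by rewrite trA trJ !mxtrace_scalar; ring.
Qed.

Lemma eigenvalue_srg_root t : eigenvalue A t -> t != k ->
  t ^+ 2 - (lam - mu) * t - (k - mu) = 0.
Proof.
move=> /eigenvalueP [x xA x0] tk.
have xJ : x *m J = 0.
  have : (t - k) *: (x *m J) = 0.
    by rewrite scalerBl scalemxAl -xA -mulmxA AJ -scalemxAr subrr.
  by move/eqP; rewrite scaler_eq0 subr_eq0 (negPf tk) => /eqP.
have : (t ^+ 2 - (lam - mu) * t - (k - mu)) *: x = 0.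
  have : x *m (A *m A) = t ^+ 2 *: x by rewrite mulmxA xA -scalemxAl xA scalerA.
  rewrite srg_mx_sqr !mulmxDr mul_mx_scalar -!scalemxAr xA xJ scaler0 addr0 => h.
  by rewrite !scalerBl -h scalerA; apply/matrixP => i j; rewrite !mxE; ring.
by move/eqP; rewrite scaler_eq0 (negPf x0) orbF => /eqP.
Qed.

(* If [b] were not an eigenvalue, cancelling [A - b] in the cubic factorization
   would kill [(A - k)(A - a)], whose trace is positive. *)
Lemma eigenvalue_srg_factor a b : a + b = lam - mu -> a * b = mu - k ->
  (0 < n)%N -> 0 < k -> 0 < a -> eigenvalue A b.
Proof.
move=> ab_sum ab_prod n0 k0 a0; have [//|not_eig] := boolP (eigenvalue A b).
have U : A - b%:M \in unitmx.
  by move: not_eig; rewrite /eigenvalue /eigenspace negbK kermx_eq0 row_free_unit.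
have : (A - k%:M) *m (A - a%:M) = 0.
  by rewrite -[LHS](mulmxK U) srg_cubic_factor // mul0mx.
move/(congr1 mxtrace)/eqP; rewrite mxtrace_srg_quadratic mxtrace0.
have pos : 0 < k * n%:R * (1 + a) by rewrite !mulr_gt0 ?ltr0n //; lra.
by rewrite gt_eqF.
Qed.

Lemma srg_smallest_eigenvalue s : (0 < n)%N -> 0 < mu -> mu < k ->
  eigenvalue A s -> (forall t, eigenvalue A t -> s <= t) ->
  s < 0 /\ s ^+ 2 - (lam - mu) * s - (k - mu) = 0.
Proof.
move=> n0 mu0 muk s_eig s_min.
set D := (lam - mu) ^+ 2 + 4 * (k - mu).
have D_gt : (lam - mu) ^+ 2 < D by rewrite /D; lra.
have sqrtD := sqr_sqrtr (ltW (le_lt_trans (sqr_ge0 _) D_gt)).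
have sqrtD_gt : `|lam - mu| < Num.sqrt D.
  by rewrite -ltr_sqr ?nnegrE ?sqrtr_ge0 // sqrtD real_normK ?num_real.
have s_neg : s < 0.
  have /ltr_normlP [sqrtD_gtN sqrtD_gtP] := sqrtD_gt.
  apply: le_lt_trans (s_min ((lam - mu - Num.sqrt D) / 2) _) _; last by lra.
  apply: (@eigenvalue_srg_factor ((lam - mu + Num.sqrt D) / 2)); rewrite ?ltr0n //;
    try lra.
  have -> : (lam - mu + Num.sqrt D) / 2 * ((lam - mu - Num.sqrt D) / 2) =
    ((lam - mu) ^+ 2 - Num.sqrt D ^+ 2) / 4 by field.
  by rewrite sqrtD /D; field.
split=> //; apply: eigenvalue_srg_root => //; rewrite lt_eqF //; lra.
Qed.

Lemma srg_degree_identity : (0 < n)%N -> k ^+ 2 = k + lam * k + mu * (n%:R - 1 - k).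
Proof.
move=> n0; pose i0 := Ordinal n0.
have JJ : J *m J = n%:R *: J.
  apply/matrixP => i j; rewrite !mxE (eq_bigr (fun=> 1)) => [|l _]; last first.
    by rewrite !mxE mulr1.
  by rewrite sumr_const card_ord mulr1.
have : (A *m A) *m J = k ^+ 2 *: J.
  by rewrite -mulmxA AJ -scalemxAr AJ scalerA -expr2.
rewrite AA !mulmxDl mul_scalar_mx -!scalemxAl !mulmxBl mul1mx AJ JJ.
move/(congr1 (fun M : 'M[R]_n => M i0 i0)); rewrite !mxE => h.
by rewrite -[LHS]mulr1 -h; ring.
Qed.

Section Projector.
Variable s : R.
(* [lra] and [nra] ignore section hypotheses, so these are moved to the goal. *)
Hypothesis s_root : s ^+ 2 - (lam - mu) * s - (k - mu) = 0.
Local Notation r := (lam - mu - s).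
Local Notation P := ((A - k%:M) *m (A - r%:M)).

Lemma srg_projector_sqr : P *m P = ((s - k) * (s - r)) *: P.
Proof.
have PA : P *m A = s *: P.
  apply/eqP; rewrite -subr_eq0 -mul_mx_scalar -mulmxBr.
  apply/eqP/srg_cubic_factor; first ring.
  by move: s_root; nra.
have Pc c : P *m (A - c%:M) = (s - c) *: P.
  by rewrite mulmxBr PA mul_mx_scalar scalerBl.
by rewrite [LHS]mulmxA Pc -scalemxAl Pc scalerA.
Qed.

Hypotheses (s_neg : s < 0) (mu_gt0 : 0 < mu) (muk : mu < k).

Lemma srg_other_root_gt0 : 0 < r.
Proof. by move: s_root s_neg muk; nra. Qed.

Lemma srg_multiplicity :
  (\rank P)%:R * ((k - s) * (r - s)) = k * n%:R * (1 + r).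
Proof.
have r_gt0 := srg_other_root_gt0.
have c_neq0 : (s - k) * (s - r) != 0.
  by rewrite mulf_neq0 // lt_eqF //; move: s_neg mu_gt0 muk; lra.
rewrite -mxtrace_srg_quadratic (mxtrace_scaled_idem c_neq0 srg_projector_sqr).
ring.
Qed.

Hypotheses (A_diag : forall i, A i i = 0)
  (A_01 : forall i j, A i j = 0 \/ A i j = 1).

Lemma srg_absolute_bound : (n <= \rank P ^ 2 + \rank P + 1)%N.
Proof.
have r_gt0 := srg_other_root_gt0.
have kr_gt0 : 0 < k * r by apply: mulr_gt0 => //; move: mu_gt0 muk; lra.
have Pij i j :
    P i j = (k - mu + k * r) * (i == j)%:R + (lam - mu - k - r) * A i j + mu.
  by rewrite mulmx_sub_scalar srg_mx_sqr !mxE; ring.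
apply: (@absolute_bound _ _ _ (k * (1 + r)) (lam - k - r) mu).
- by move=> i; rewrite Pij A_diag eqxx /=; ring.
- move=> i j ij; rewrite Pij (negPf ij) /=.
  by case: (A_01 i j) => ->; [right|left]; ring.
- by rewrite gt_eqF //; move: s_neg mu_gt0 muk; lra.
- by rewrite gt_eqF //; move: muk; lra.
Qed.

End Projector.
End SRGMatrix.

(* [m] stands for |s|, [r] for the positive restricted eigenvalue and [g] for the
   multiplicity of [s]. *)
Section SRGParameters.
Variables (R : realFieldType) (k lam mu v m r g : R).
Hypotheses (mu_ge1 : 1 <= mu) (mu_lt_k : mu < k) (lam_ge0 : 0 <= lam) (m_gt0 : 0 < m)
  (r_def : r = lam - mu + m) (rm_eq : r * m = k - mu)
  (degree_eq : k ^+ 2 = k + lam * k + mu * (v - 1 - k)).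

Lemma srg_eigenvalue_abs_le_deg : m <= k.
Proof.
rewrite leNgt; apply/negP => k_lt_m.
have : m * (m - mu) <= k - mu.
  by rewrite -rm_eq r_def mulrC ler_pM2r //; move: lam_ge0; lra.
by move: k_lt_m mu_ge1 mu_lt_k; nra.
Qed.

Lemma srg_order_le_deg_sqr : v <= 2 * k ^+ 2.
Proof.
move: degree_eq mu_ge1 mu_lt_k lam_ge0; rewrite expr2.
by have [|] := leP 0 (v - 1 - k); nra.
Qed.

Lemma srg_order_mul_mu : v * mu = (k - r) * (k + m).
Proof. by move: degree_eq rm_eq; rewrite r_def expr2; nra. Qed.

Lemma srg_sixth_power_bound_small : m <= 2 * r -> v * m ^+ 6 < 64 * k ^+ 6.
Proof.
move=> m_le; have k_ge1 : 1 <= k by move: mu_ge1 mu_lt_k; lra.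
have m2_lt : m ^+ 2 < 2 * k by rewrite expr2; move: rm_eq mu_ge1 m_gt0; nra.
have m6_lt : m ^+ 6 < (2 * k) ^+ 3.
  by rewrite (exprM m 2 3) ltrXn2r // exprn_ge0 // ltW.
have m6_ge0 : 0 <= m ^+ 6 by rewrite exprn_ge0 // ltW.
have : v * m ^+ 6 <= 2 * k ^+ 2 * m ^+ 6 by rewrite ler_wpM2r // srg_order_le_deg_sqr.
have : 2 * k ^+ 2 * m ^+ 6 < 16 * k ^+ 5.
  have k2_gt0 : 0 < 2 * k ^+ 2 by rewrite mulr_gt0 // exprn_gt0 //; lra.
  by rewrite -(ltr_pM2l k2_gt0) in m6_lt; move: m6_lt; rewrite !exprS expr0; lra.
have : 16 * k ^+ 5 <= 64 * k ^+ 6.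
  have k5_ge1 : 1 <= k ^+ 5 by rewrite exprn_ege1.
  by rewrite (exprS k 5); move: k_ge1 k5_ge1; nra.
lra.
Qed.

Hypotheses (mult_eq : g * ((k + m) * (r + m)) = k * v * (1 + r)) (g_ge0 : 0 <= g)
  (abs_bound : v <= g ^+ 2 + g + 1).

Lemma srg_multiplicity_cube_bound : 2 * r < m -> g * m ^+ 3 <= 4 * k ^+ 3.
Proof.
move=> m_gt; have m_le_k := srg_eigenvalue_abs_le_deg.
have r_gt0 : 0 < r by move: rm_eq m_gt0 mu_lt_k; nra.
have m_lt : m < 2 * mu by move: r_def lam_ge0; lra.
have g_mu : g * ((r + m) * mu) = k * (1 + r) * (k - r).
  apply: (mulIf (lt0r_neq0 (_ : 0 < k + m))); first by lra.
  transitivity (g * ((k + m) * (r + m)) * mu); first by ring.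
  by rewrite mult_eq -[RHS]mulrA -srg_order_mul_mu; ring.
have grm_ge0 : 0 <= g * (r + m) by rewrite mulr_ge0 //; lra.
have g_m2 : g * m ^+ 2 <= 2 * k ^+ 2 * (1 + r).
  have : g * m ^+ 2 <= g * (r + m) * m.
    by rewrite expr2 mulrA ler_wpM2r ?ler_wpM2l // ?ltW //; lra.
  have : g * (r + m) * m <= 2 * (k * (1 + r) * (k - r)).
    by rewrite -g_mu; have := ler_wpM2l grm_ge0 (ltW m_lt); lra.
  have : k * (1 + r) * (k - r) <= k ^+ 2 * (1 + r).
    by rewrite expr2; move: mu_lt_k mu_ge1 r_gt0; nra.
  lra.
have : g * m ^+ 2 * m <= 2 * k ^+ 2 * (1 + r) * m by rewrite ler_wpM2r // ltW.
have : 2 * k ^+ 2 * (1 + r) * m = 2 * k ^+ 2 * (m + (k - mu)) by rewrite -rm_eq; ring.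
have k2_ge0 : 0 <= k ^+ 2 by apply: sqr_ge0.
by rewrite exprSr mulrA (exprS k 2); nra.
Qed.

Lemma srg_sixth_power_bound_large : 2 * r < m -> v * m ^+ 6 < 64 * k ^+ 6.
Proof.
move=> m_gt; have G := srg_multiplicity_cube_bound m_gt.
have k_ge1 : 1 <= k by move: mu_ge1 mu_lt_k; lra.
have k_gt0 : 0 < k by lra.
have M_le : m ^+ 3 <= k ^+ 3.
  by rewrite ler_pXn2r ?nnegrE ?srg_eigenvalue_abs_le_deg // ltW.
have K_ge1 : 1 <= k ^+ 3 by rewrite exprn_ege1.
have M_gt0 : 0 < m ^+ 3 by apply: exprn_gt0.
rewrite (exprD m 3 3) (exprD k 3 3).
move: G M_le K_ge1 M_gt0 (mulr_ge0 g_ge0 (ltW M_gt0)).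
set M := m ^+ 3; set K := k ^+ 3 => G M_le K_ge1 M_gt0 gM_ge0.
have : v * (M * M) <= (g * M) ^+ 2 + (g * M) * M + M * M.
  have -> : (g * M) ^+ 2 + g * M * M + M * M = (g ^+ 2 + g + 1) * (M * M) by ring.
  by rewrite ler_wpM2r // mulr_ge0 // ltW.
by rewrite expr2; nra.
Qed.

Lemma srg_sixth_power_bound : v * m ^+ 6 < 64 * k ^+ 6.
Proof.
have [] := leP m (2 * r).
  exact: srg_sixth_power_bound_small.
exact: srg_sixth_power_bound_large.
Qed.

End SRGParameters.

Lemma powR_inv_ltr (R : realType) (a b : R) n : (0 < n)%N -> 0 <= a -> 0 <= b ->
  a < b ^+ n -> a `^ n%:R^-1 < b.
Proof.
move=> n_gt0 a_ge0 b_ge0 a_lt; rewrite ltNge; apply/negP => b_le.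
have root_n : (a `^ n%:R^-1) ^+ n = a.
  by rewrite -powR_mulrn ?powR_ge0 // -powRrM mulVf ?pnatr_eq0 -?lt0n // powRr1.
by move: a_lt; rewrite -[X in X < _]root_n ltNge lerXn2r ?nnegrE ?powR_ge0.
Qed.

Section StronglyRegularGraph.
Variables (T : finType) (e : rel T) (k lam mu : nat).
Hypotheses (e_sym : symmetric e) (e_irr : irreflexive e)
  (deg : forall x, #|[set y | e x y]| = k)
  (lam_cnt : forall x y, e x y -> #|[set z | e x z && e y z]| = lam)
  (mu_cnt : forall x y, x != y -> ~~ e x y -> #|[set z | e x z && e y z]| = mu).

Lemma srg_mu_le_deg : (exists x y, compl_rel e x y) -> (mu <= k)%N.
Proof.
move=> [x [y /andP [xy nexy]]]; rewrite -(mu_cnt xy nexy) -(deg x).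
by apply: subset_leq_card; apply/subsetP => z; rewrite !inE => /andP [].
Qed.

(* With [mu = 0] the closed neighbourhood of [x] would be a union of components. *)
Lemma srg_mu_gt0 : (exists x y, compl_rel e x y) -> graph_connected e -> (0 < mu)%N.
Proof.
move=> [x [y /andP [xy nexy]]] e_conn; rewrite lt0n; apply/negP => /eqP mu0.
pose N := [pred z | (z == x) || e x z].
have N_closed : closed e N.
  suff step u w : e u w -> u \in N -> w \in N.
    by move=> u w euw; apply/idP/idP; apply: step; rewrite // e_sym.
  move=> euw; rewrite !inE => /orP [/eqP <- | exu]; first by rewrite euw orbT.
  have [//|wx /=] := eqVneq w x; apply/negPn/negP => nexw.
  have xw : x != w by rewrite eq_sym.
  have /eqP := mu_cnt xw nexw.
  by rewrite mu0 cards_eq0 => /eqP/setP/(_ u); rewrite !inE exu e_sym euw.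
have := closed_connect N_closed (e_conn x y).
by rewrite !inE eqxx eq_sym (negPf xy) (negPf nexy).
Qed.

(* With [mu = k] non-adjacent vertices would have equal neighbourhoods, hence so
   would all vertices, by connectivity of the complement; adjacent ones cannot. *)
Lemma srg_mu_lt_deg : (exists x y, e x y) -> (exists x y, compl_rel e x y) ->
  graph_connected (compl_rel e) -> (mu < k)%N.
Proof.
move=> [x [y exy]] nonedge ce_conn; rewrite ltn_neqAle srg_mu_le_deg // andbT.
apply/eqP => muk.
have same_nbhd u w : compl_rel e u w -> [set t | e u t] = [set t | e w t].
  move=> /andP [uw neuw]; set C := [set z | e u z && e w z].
  have C_card : #|C| = k by rewrite mu_cnt.
  have [Cu Cw] : C \subset [set t | e u t] /\ C \subset [set t | e w t].
    by split; apply/subsetP => z; rewrite !inE => /andP [].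
  have eq_u : C = [set t | e u t] by apply/eqP; rewrite eqEcard Cu deg C_card leqnn.
  have eq_w : C = [set t | e w t] by apply/eqP; rewrite eqEcard Cw deg C_card leqnn.
  by rewrite -eq_u -eq_w.
pose S := [pred z | [set t | e z t] == [set t | e x t]].
have S_closed : closed (compl_rel e) S by move=> u w /same_nbhd; rewrite !inE => ->.
have := closed_connect S_closed (ce_conn x y).
by rewrite !inE eqxx => /esym/eqP/setP/(_ y); rewrite !inE exy e_irr.
Qed.

Variable R : comNzRingType.
Local Notation A := (adjmx R e).
Local Notation J := (const_mx 1 : 'M[R]_#|T|).

Lemma sum_enum_val_pred (P : pred T) :
  \sum_(l < #|T|) ((P (enum_val l))%:R : R) = #|[set y | P y]|%:R.
Proof.
rewrite (reindex (@enum_rank T)) /=; last by apply: onW_bij; exact: enum_rank_bij.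
under eq_bigr do rewrite enum_rankK.
rewrite -sum1_card natr_sum [RHS]big_mkcond /=; apply: eq_bigr => t _.
by rewrite inE; case: (P t).
Qed.

Lemma adjmx_diag i : A i i = 0.
Proof. by rewrite mxE e_irr. Qed.

Lemma adjmx01 i j : A i j = 0 \/ A i j = 1.
Proof. by rewrite mxE; case: (e _ _); [right|left]. Qed.

Lemma adjmx_trace : \tr A = 0.
Proof. by rewrite /mxtrace big1 // => i _; rewrite adjmx_diag. Qed.

Lemma adjmx_mul_const : A *m J = k%:R *: J.
Proof.
apply/matrixP => i j; rewrite !mxE.
under eq_bigr do rewrite [const_mx _ _ _]mxE mulr1 mxE.
by rewrite mulr1 -(deg (enum_val i)) sum_enum_val_pred.
Qed.

Lemma adjmx_sqr : A *m A = k%:R%:M + lam%:R *: A + mu%:R *: (J - 1%:M - A).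
Proof.
apply/matrixP => i j; rewrite !mxE.
under eq_bigr do rewrite !mxE -natrM mulnb (e_sym (enum_val _) (enum_val j)).
rewrite (sum_enum_val_pred (fun y => e (enum_val i) y && e (enum_val j) y)).
have [<-|ij] := eqVneq i j.
  rewrite e_irr /=.
  have -> : [set y | e (enum_val i) y && e (enum_val i) y] =
            [set y | e (enum_val i) y].
    by apply/setP => y; rewrite !inE andbb.
  by rewrite deg; ring.
have xy : enum_val i != enum_val j by apply: contra ij => /eqP/enum_val_inj ->.
rewrite mulr0n; case exy: (e (enum_val i) (enum_val j)).
  by rewrite lam_cnt //=; ring.
by rewrite mu_cnt ?exy //=; ring.
Qed.

End StronglyRegularGraph.

Lemma primitive_srg_smallest_eigenvalue_bound (R : rcfType) (T : finType)
    (e : rel T) (v k lam mu : nat) (s : R) :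
  primitive_srg e v k lam mu -> smallest_eigenvalue e s ->
  s < 0 /\ v%:R * (- s) ^+ 6 < 64 * k%:R ^+ 6.
Proof.
move=> [[[e_sym e_irr] [<- [deg [lam_cnt [mu_cnt [edge nonedge]]]]]] [e_conn ce_conn]].
case=> s_eig s_min.
have AJ := adjmx_mul_const deg R; have trA := adjmx_trace e_irr R.
have AA := adjmx_sqr e_sym e_irr deg lam_cnt mu_cnt R.
have n_gt0 : (0 < #|T|)%N by case: edge => x _; apply/card_gt0P; exists x.
have mu_gt0 : 0 < mu%:R :> R by rewrite ltr0n (srg_mu_gt0 e_sym mu_cnt).
have mu_lt_k : mu%:R < k%:R :> R by rewrite ltr_nat (srg_mu_lt_deg e_irr deg mu_cnt).
have [s_neg s_root] :=
  srg_smallest_eigenvalue AJ trA AA n_gt0 mu_gt0 mu_lt_k s_eig s_min.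
have mult := srg_multiplicity AJ trA AA s_root s_neg mu_gt0 mu_lt_k.
have abs := srg_absolute_bound AA s_root s_neg mu_gt0 mu_lt_k
  (adjmx_diag e_irr R) (adjmx01 e R).
split=> //; apply: (srg_sixth_power_bound _ mu_lt_k (ler0n _ lam) _ erefl _
  (srg_degree_identity AJ AA n_gt0) mult (ler0n _ _)).
- by rewrite ler1n -(ltr0n R).
- by rewrite oppr_gt0.
- by move: s_root; nra.
- by rewrite -natrX -natrD natr1 ler_nat -addn1.
Qed.

Theorem lemma1p5 (R : realType) (T : finType) (e : rel T) (v k lam mu : nat) (s : R) :
  primitive_srg e v k lam mu ->
  smallest_eigenvalue e s ->
  k%:R / `|s| > (v%:R `^ (6%:R^-1)) / 2.
Proof.
move=> srg s_min.
have [s_neg bound] := primitive_srg_smallest_eigenvalue_bound srg s_min.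
have root_lt : v%:R `^ 6%:R^-1 < 2 * k%:R / - s.
  apply: powR_inv_ltr; rewrite ?divr_ge0 ?mulr_ge0 ?ler0n ?oppr_ge0 ?ltW //.
  rewrite expr_div_n ltr_pdivlMr ?exprn_gt0 ?oppr_gt0 //.
  by rewrite (_ : (2 * k%:R) ^+ 6 = 64 * k%:R ^+ 6) //; ring.
rewrite ltr0_norm //; lra.
Qed.
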